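(* For an oriented classical or virtual link $L$, the forbidden maximal path polynomial $\Phi_F^{MP}(L)$ is an invariant of classical isotopy, virtual isotopy and link homotopy classes of links.
   Context: An oriented (classical or virtual) link with $n$ components is represented by a signed Gauss diagram: $n$ oriented circles, one per component, with arrows from over-crossing point to under-crossing point, each arrow carrying the sign $\pm1$ of its crossing; virtual links are equivalence classes of such diagrams under Gauss-diagram Reidemeister moves. Link homotopy is the equivalence relation generated by isotopy and crossing changes at crossings where a component crosses itself. The forbidden moves are: interchange two adjacent arrowheads, or two adjacent arrow tails, on a circle. Using forbidden and Reidemeister moves, a Gauss diagram can be reduced to one with no arrow having both endpoints on the same circle and in which, for each ordered pair $(j,k)$ of distinct circles, all arrows from circle $j$ to circle $k$ have the same sign. The forbidden quiver $\mathcal{FQ}(L)$ is the signed quiver obtained by shrinking each circle of this reduced diagram to a vertex, each arrow $e$ keeping its sign $\epsilon(e)\in\{\pm1\}$. A path in $\mathcal{FQ}(L)$ is a sequence of arrows, each starting where the previous one ends; it is non-repeating if it contains no repeated subpath (no arrow is used twice), and maximal if it cannot be composed with any further path without producing a repeated subpath. Writing $MP$ for the set of maximal non-repeating paths and $|p|$ for the length (number of arrows) of $p$, the forbidden maximal path polynomial is $\Phi_F^{MP}(L)=\sum_{p\in MP}x^{\sum_{e\in p}\epsilon(e)}y^{|p|}$. *)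

From Stdlib Require Import Relations.
From mathcomp Require Import all_boot all_algebra.
Set Implicit Arguments. Unset Strict Implicit. Unset Printing Implicit Defensive.
Import GRing.Theory Num.Theory.

(* An endpoint of an arrow: ((arrow label, is_head), sign) ; sign true = +1.
   Arrows go from the over-crossing point (tail) to the under-crossing
   point (head). *)
Definition endpt := ((nat * bool) * bool)%type.
(* A Gauss diagram: one word per circle (component), the word being a linear
   representative of the cyclic sequence of endpoints met along the
   oriented circle. *)
Definition gdiag := seq (seq endpt).

Definition tl (a : nat) (s : bool) : endpt := ((a, false), s).
Definition hd (a : nat) (s : bool) : endpt := ((a, true), s).

Definition gd_wf (D : gdiag) : bool :=
  uniq [seq e.1 | e <- flatten D] &&
  all (fun e : endpt => ((e.1.1, ~~ e.1.2), e.2) \in flatten D) (flatten D).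

Definition ids (D : gdiag) : seq nat := [seq e.1.1 | e <- flatten D].

Definition adjw (w : seq endpt) (x y : endpt) : bool :=
  (x \in w) && (nth x (rot 1 w) (index x w) == y).
Definition adjD (D : gdiag) x y : bool := has (fun w => adjw w x y) D.
Definition adj2 (D : gdiag) x y : bool := adjD D x y || adjD D y x.

Definition del (a : nat) (D : gdiag) : gdiag :=
  [seq [seq e <- w | e.1.1 != a] | w <- D].
Definition swap_ep (x y e : endpt) : endpt :=
  if e == x then y else if e == y then x else e.
Definition swapD (x y : endpt) (D : gdiag) : gdiag := map (map (swap_ep x y)) D.
Definition flipD (a : nat) (D : gdiag) : gdiag :=
  map (map (fun e : endpt => if e.1.1 == a then (e.1, ~~ e.2) else e)) D.
Definition rotD (i : nat) (D : gdiag) : gdiag :=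
  [seq (if k == i then rot 1 (nth [::] D k) else nth [::] D k) | k <- iota 0 (size D)].
Definition renameD (f : nat -> nat) (D : gdiag) : gdiag :=
  map (map (fun e : endpt => ((f e.1.1, e.1.2), e.2))) D.

Definition circ (D : gdiag) (x : endpt) : nat := find (fun w => x \in w) D.

Definition mR1 (D D' : gdiag) : Prop :=
  exists a s, a \notin ids D /\ adj2 D' (tl a s) (hd a s) /\ del a D' = D.
Definition mR2 (D D' : gdiag) : Prop :=
  exists a b s, a != b /\ a \notin ids D /\ b \notin ids D /\
    adj2 D' (tl a s) (tl b (~~ s)) /\ adj2 D' (hd a s) (hd b (~~ s)) /\
    del a (del b D') = D.
(* R3: arrows a : T -> M, b : T -> B, c : M -> B (top, middle, bottom strands);
   on each of the three strands the two endpoints are adjacent and the move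
   reverses their order on all three strands.  oT (resp. oM, oB) records
   whether tail a precedes tail b (resp. head a precedes tail c, head b precedes
   head c).  The admissible combinations of orders and signs (those realised by
   an actual triangle of three oriented strands in the plane) are exactly
   those with  oM+oB = sa+sb  and  oT+oB = sa+sc  (mod 2). *)
Definition mR3 (D D' : gdiag) : Prop :=
  exists a b c sa sb sc (oT oM oB : bool),
    [/\ a != b, a != c & b != c] /\
    (if oT then adjD D (tl a sa) (tl b sb) else adjD D (tl b sb) (tl a sa)) /\
    (if oM then adjD D (hd a sa) (tl c sc) else adjD D (tl c sc) (hd a sa)) /\
    (if oB then adjD D (hd b sb) (hd c sc) else adjD D (hd c sc) (hd b sb)) /\
    (oM (+) oB = sa (+) sb) /\ (oT (+) oB = sa (+) sc) /\
    D' = swapD (tl a sa) (tl b sb) (swapD (hd a sa) (tl c sc)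
           (swapD (hd b sb) (hd c sc) D)).
Definition mRot (D D' : gdiag) : Prop := exists i, i < size D /\ D' = rotD i D.
Definition mRen (D D' : gdiag) : Prop :=
  exists f : nat -> nat, injective f /\ D' = renameD f D.
Definition mFH (D D' : gdiag) : Prop :=
  exists a b s t, a != b /\ adjD D (hd a s) (hd b t) /\ D' = swapD (hd a s) (hd b t) D.
Definition mFT (D D' : gdiag) : Prop :=
  exists a b s t, a != b /\ adjD D (tl a s) (tl b t) /\ D' = swapD (tl a s) (tl b t) D.
Definition mSC (D D' : gdiag) : Prop :=
  exists a s, tl a s \in flatten D /\ circ D (tl a s) = circ D (hd a s) /\
    D' = flipD a D.

Definition isotopy_move D D' : Prop :=
  mR1 D D' \/ mR2 D D' \/ mR3 D D' \/ mRot D D' \/ mRen D D'.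

Definition viso_step (D D' : gdiag) : Prop :=
  gd_wf D /\ gd_wf D' /\ isotopy_move D D'.
Definition htpy_step (D D' : gdiag) : Prop :=
  gd_wf D /\ gd_wf D' /\ (isotopy_move D D' \/ mSC D D').
Definition forb_step (D D' : gdiag) : Prop :=
  gd_wf D /\ gd_wf D' /\ (isotopy_move D D' \/ mFH D D' \/ mFT D D').

Definition viso_equiv := clos_refl_sym_trans gdiag viso_step.
Definition htpy_equiv := clos_refl_sym_trans gdiag htpy_step.
Definition forb_equiv := clos_refl_sym_trans gdiag forb_step.

(* arrows are represented by their tails *)
Definition arrowsD (D : gdiag) : seq endpt := [seq e <- flatten D | ~~ e.1.2].
Definition src (D : gdiag) (e : endpt) : nat := circ D e.
Definition tgt (D : gdiag) (e : endpt) : nat := circ D ((e.1.1, true), e.2).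

Definition reduced (D : gdiag) : bool :=
  all (fun e => src D e != tgt D e) (arrowsD D) &&
  all (fun e => all (fun f => (src D e == src D f) ==> (tgt D e == tgt D f) ==>
                              (e.2 == f.2)) (arrowsD D)) (arrowsD D).

Definition isMP (D : gdiag) (p : seq endpt) : bool :=
  match p with
  | [::] => false
  | x :: q =>
      all (fun e => e \in arrowsD D) p && uniq p &&
      path (fun e f => tgt D e == src D f) x q &&
      ~~ has (fun e => (e \notin p) &&
                ((src D e == tgt D (last x q)) || (tgt D e == src D x)))
             (arrowsD D)
  end.

Definition wt (p : seq endpt) : int :=
  (\sum_(e <- p) (if e.2 then 1 else -1))%R.

Fixpoint seqs (k : nat) (A : seq endpt) : seq (seq endpt) :=
  match k with
  | 0 => [:: [::]]
  | k'.+1 => [seq x :: s | x <- A, s <- seqs k' A]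
  end.

(* PhiF D a k = coefficient of x^a y^k in the forbidden maximal path polynomial
   computed from the quiver of D, i.e. the number of maximal non-repeating
   paths p with sum of signs a and length k. *)
Definition PhiF (D : gdiag) (a : int) (k : nat) : nat :=
  count (fun p => isMP D p && (wt p == a)) (seqs k (arrowsD D)).

From Pilot Require Import Defs.
From Stdlib Require Import Relations.
From mathcomp Require Import all_boot all_algebra.
From mathcomp Require Import zify.
Set Implicit Arguments. Unset Strict Implicit. Unset Printing Implicit Defensive.
Import GRing.Theory Num.Theory.

(* For distinct circles j and k, let lk D j k be the sum of the signs of the
   arrows from circle j to circle k.  It is unchanged by every move in sight:
   an R1 arrow is a loop, the two arrows of an R2 move are parallel with
   opposite signs, R3, rotation and the forbidden moves only permute endpoints
   within their circles, and a self-crossing change flips the sign of a loop.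
   In a reduced diagram all arrows from j to k carry the sign of lk D j k, so
   there are exactly |lk D j k| of them: the forbidden quiver, as a multiset
   of signed edges, is determined by the lk's.  A bijection between the arrows
   of two such quivers preserving source, target and sign carries maximal
   non-repeating paths to maximal non-repeating paths of the same length and
   weight, hence the two polynomials agree. *)

Lemma uniq_map_inj_in (T U : eqType) (g : T -> U) (s : seq T) :
  uniq (map g s) -> {in s &, injective g}.
Proof.
elim: s => //= z s IH /andP[gz_out us] x y; rewrite !inE.
case/orP=> [/eqP->|xs]; case/orP=> [/eqP->|ys] // E.
- by move: gz_out; rewrite E map_f.
- by move: gz_out; rewrite -E map_f.
- exact: IH.
Qed.

Lemma mem_map_in (T U : eqType) (f : T -> U) (A p : seq T) x :
  {in A &, injective f} -> {subset p <= A} -> x \in A ->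
  (f x \in map f p) = (x \in p).
Proof.
move=> f_inj pA xA; apply/mapP/idP => [[y yp fxy]|xp]; last by exists x.
by rewrite (f_inj x y xA (pA y yp) fxy).
Qed.

Lemma perm_eq_map_bij (T U : eqType) (K1 K2 : T -> U) (s1 s2 : seq T) :
  uniq s1 -> uniq s2 -> perm_eq (map K1 s1) (map K2 s2) ->
  exists f : T -> T, perm_eq (map f s1) s2 /\ {in s1, forall x, K2 (f x) = K1 x}.
Proof.
elim: s1 s2 => [|x s1 IH] s2 u1 u2 P.
  by exists id; case: s2 P {u2} => // y s2 /perm_size.
have [y ys Ky] : exists2 y, y \in s2 & K1 x = K2 y.
  by apply/mapP; rewrite -(perm_mem P) mem_head.
have P' : perm_eq (map K1 s1) (map K2 (rem y s2)).
  by rewrite -(perm_cons (K1 x)) (perm_trans P) // Ky -map_cons perm_map ?perm_to_rem.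
case/andP: u1 => x_out u1; have [f [Pf Kf]] := IH _ u1 (rem_uniq _ u2) P'.
exists (fun z => if z == x then y else f z); split.
  rewrite /= eqxx.
  have -> : map (fun z => if z == x then y else f z) s1 = map f s1.
    by apply/eq_in_map => z zs; case: eqP zs x_out => // ->->.
  by rewrite perm_sym (perm_trans (perm_to_rem ys)) // perm_cons perm_sym.
by move=> z; rewrite inE; case: eqP => [->|_] //= /Kf.
Qed.

Definition labels_uniq (D : gdiag) : bool := uniq [seq e.1 | e <- flatten D].

Lemma wf_labels_uniq D : gd_wf D -> labels_uniq D.
Proof. by case/andP. Qed.

Lemma labels_uniq_flatten D : labels_uniq D -> uniq (flatten D).
Proof. exact: map_uniq. Qed.

Lemma flatten_del a D : flatten (del a D) = [seq e <- flatten D | e.1.1 != a].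
Proof. by rewrite filter_flatten. Qed.

Lemma labels_uniq_del a D : labels_uniq D -> labels_uniq (del a D).
Proof.
by apply: subseq_uniq; rewrite flatten_del map_subseq ?filter_subseq.
Qed.

Lemma arrow_label_tail D e a s : labels_uniq D -> e \in arrowsD D ->
  tl a s \in flatten D -> e.1.1 = a -> e = tl a s.
Proof.
move=> lu; rewrite mem_filter => /andP[e_tail eD] aD ea.
apply: (uniq_map_inj_in lu eD aD).
by case: e ea e_tail {eD} => [[n []] t] //= ->.
Qed.

Lemma circ_eq D w x y : uniq (flatten D) -> w \in D -> x \in w -> y \in w ->
  circ D x = circ D y.
Proof.
rewrite /circ; elim: D => //= v D IH; rewrite cat_uniq => /and3P[_ vD uD].
rewrite inE => /orP[/eqP->|wD] xw yw; first by rewrite xw yw.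
have out z : z \in w -> z \notin v.
  move=> zw; apply: contra vD => zv.
  by apply/hasP; exists z => //; apply/flattenP; exists w.
by rewrite (negbTE (out x xw)) (negbTE (out y yw)) (IH uD wD xw yw).
Qed.

Lemma adjD_circ D x y : uniq (flatten D) -> adjD D x y ->
  [/\ x \in flatten D, y \in flatten D & circ D x = circ D y].
Proof.
move=> u /hasP[w wD /andP[xw /eqP yE]].
have yw : y \in w by rewrite -yE -(mem_rot 1) mem_nth // size_rot index_mem.
by split; [apply/flattenP; exists w|apply/flattenP; exists w|exact: circ_eq u wD xw yw].
Qed.

Lemma adj2_circ D x y : uniq (flatten D) -> adj2 D x y ->
  [/\ x \in flatten D, y \in flatten D & circ D x = circ D y].
Proof. by move=> u /orP[]/(adjD_circ u) [] //. Qed.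

Lemma circ_map D (h : endpt -> endpt) z : injective h ->
  circ (map (map h) D) (h z) = circ D z.
Proof. by move=> h_inj; rewrite /circ find_map; apply: eq_find => w /=; rewrite mem_map. Qed.

Lemma circ_del a D z : z.1.1 != a -> circ (del a D) z = circ D z.
Proof.
by move=> za; rewrite /circ find_map; apply: eq_find => w /=; rewrite mem_filter za.
Qed.

Lemma arrowsD_del a D : arrowsD (del a D) = [seq e <- arrowsD D | e.1.1 != a].
Proof.
by rewrite /arrowsD flatten_del -!filter_predI; apply: eq_filter => e /=; rewrite andbC.
Qed.

Definition arrow_sign (e : endpt) : int := if e.2 then 1%R else (-1)%R.

Definition lk_term (D : gdiag) (j k : nat) (e : endpt) : int :=
  if (src D e == j) && (tgt D e == k) then arrow_sign e else 0%R.

Definition lk (D : gdiag) (j k : nat) : int := (\sum_(e <- arrowsD D) lk_term D j k e)%R.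

Lemma lk_term_loop D j k e : j != k -> src D e = tgt D e -> lk_term D j k e = 0%R.
Proof. by rewrite /lk_term => jk ->; case: eqP => //= ->; rewrite (negbTE jk). Qed.

Lemma lk_term_del a D j k e : e.1.1 != a -> lk_term (del a D) j k e = lk_term D j k e.
Proof. by move=> ea; rewrite /lk_term /src /tgt !circ_del. Qed.

Lemma lk_del D a s j k : labels_uniq D -> tl a s \in flatten D ->
  lk D j k = (lk_term D j k (tl a s) + lk (del a D) j k)%R.
Proof.
move=> lu aD; have uA : uniq (arrowsD D) := filter_uniq _ (labels_uniq_flatten lu).
have aA : tl a s \in arrowsD D by rewrite mem_filter aD.
have other_label : {in arrowsD D, forall e, (e != tl a s) = (e.1.1 != a)}.
  move=> e eA; case: (e.1.1 =P a) => [ea|nea].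
    by rewrite (arrow_label_tail lu eA aD ea) eqxx.
  by apply/eqP=> eE; apply: nea; rewrite eE.
rewrite /lk (bigD1_seq _ aA uA) -big_filter (eq_in_filter other_label) -arrowsD_del.
congr (_ + _)%R; apply: eq_big_seq => e.
by rewrite arrowsD_del mem_filter => /andP[/lk_term_del->].
Qed.

Lemma lk_R1 D D' j k : gd_wf D' -> mR1 D D' -> j != k -> lk D j k = lk D' j k.
Proof.
move=> /wf_labels_uniq lu [a [s [_ [adj <-]]]] jk.
have [aD _ loop] := adj2_circ (labels_uniq_flatten lu) adj.
by rewrite (lk_del _ _ lu aD) lk_term_loop ?add0r.
Qed.

Lemma lk_R2 D D' j k : gd_wf D' -> mR2 D D' -> lk D j k = lk D' j k.
Proof.
move=> /wf_labels_uniq lu [a [b [s [ab [_ [_ [adj_tl [adj_hd <-]]]]]]]].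
have u := labels_uniq_flatten lu.
have [aD bD same_src] := adj2_circ u adj_tl.
have [_ _ same_tgt] := adj2_circ u adj_hd.
have a_del : tl a s \in flatten (del b D') by rewrite flatten_del mem_filter aD andbT.
rewrite [RHS](lk_del _ _ lu bD) (lk_del _ _ (labels_uniq_del b lu) a_del) addrA.
rewrite lk_term_del //.
have -> : lk_term D' j k (tl b (~~ s)) = (- lk_term D' j k (tl a s))%R.
  by rewrite /lk_term /src /tgt /= same_src same_tgt /arrow_sign; case: ifP; case: (s).
by rewrite addNr add0r.
Qed.

Definition same_circles (D D' : gdiag) : Prop :=
  perm_eq (flatten D) (flatten D') /\ circ D =1 circ D'.

Lemma lk_same_circles D D' j k : same_circles D D' -> lk D j k = lk D' j k.
Proof.
case=> P C; rewrite /lk /arrowsD (perm_big _ (perm_filter _ P)).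
by apply: eq_bigr => e _; rewrite /lk_term /src /tgt !C.
Qed.

Lemma swap_epK x y : involutive (swap_ep x y).
Proof.
move=> e; rewrite /swap_ep; case: (e =P x) => [->|ex]; first by rewrite eqxx; case: eqP.
case: (e =P y) => [->|ey]; first by rewrite eqxx.
by rewrite (introF eqP ex) (introF eqP ey).
Qed.

Lemma same_circles_refl D : same_circles D D.
Proof. by split. Qed.

Lemma same_circles_swapD D D1 x y : uniq (flatten D) -> adj2 D x y ->
  same_circles D D1 -> same_circles D (swapD x y D1).
Proof.
move=> u /(adj2_circ u)[xD yD cxy] [P C]; have swap_inj := can_inj (swap_epK x y).
have swap_mem z : (swap_ep x y z \in flatten D) = (z \in flatten D).
  by rewrite /swap_ep; case: eqP => [->|_]; [|case: eqP => [->|_]]; rewrite ?xD ?yD.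
split.
  rewrite /swapD -map_flatten; apply: (perm_map_inj swap_inj).
  rewrite -map_comp (eq_map (swap_epK x y)) map_id.
  apply: uniq_perm; rewrite ?map_inj_uniq -?(perm_uniq P) // => z.
  by rewrite -{1}(swap_epK x y z) mem_map // swap_mem (perm_mem P).
move=> z; rewrite -(swap_epK x y z) /swapD circ_map // swap_epK -!C /swap_ep.
by case: eqP => [->|_]; [|case: eqP => [->|_]].
Qed.

Lemma same_circles_perm_words D D' : all2 (fun w w' => perm_eq w w') D D' -> same_circles D D'.
Proof.
elim: D D' => [|w D IH] [|w' D'] //= /andP[ww' /IH[P C]]; split; first exact: perm_cat.
by move=> z; rewrite /circ /= (perm_mem ww'); case: (z \in w') => //=; rewrite -!/(circ _ _) C.
Qed.

Lemma rotD_cons i w D : Defs.rotD i (w :: D) =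
  (if i == 0 then rot 1 w else w) :: (if i is i'.+1 then Defs.rotD i' D else D).
Proof.
rewrite /Defs.rotD /= eq_sym; congr (_ :: _); rewrite -[1]/(1 + 0) iotaDl -map_comp.
case: i => [|i]; last exact: eq_map.
by rewrite -[RHS](mkseq_nth [::]); apply: eq_map.
Qed.

Lemma same_circles_rotD i D : same_circles D (Defs.rotD i D).
Proof.
apply: same_circles_perm_words; elim: D i => [|w D IH] [|i] //; rewrite rotD_cons /=.
  by rewrite perm_sym perm_rot perm_refl /=; elim: D {IH} => //= v D ->; rewrite perm_refl.
by rewrite perm_refl IH.
Qed.

Lemma arrowsD_map D (h : endpt -> endpt) : (forall e, (h e).1.2 = e.1.2) ->
  arrowsD (map (map h) D) = map h (arrowsD D).
Proof.
move=> h_end; rewrite /arrowsD -map_flatten filter_map.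
by congr map; apply: eq_filter => e /=; rewrite h_end.
Qed.

Lemma lk_map D (h : endpt -> endpt) j k : injective h ->
  (forall e, (h e).1.2 = e.1.2) ->
  (forall e, h ((e.1.1, true), e.2) = (((h e).1.1, true), (h e).2)) ->
  {in arrowsD D, forall e, src D e != tgt D e -> (h e).2 = e.2} -> j != k ->
  lk (map (map h) D) j k = lk D j k.
Proof.
move=> h_inj h_end h_head h_sign jk; rewrite /lk arrowsD_map // big_map.
apply: eq_big_seq => e eA.
have srcE : src (map (map h) D) (h e) = src D e by exact: circ_map.
have tgtE : tgt (map (map h) D) (h e) = tgt D e by rewrite /tgt -h_head circ_map.
have [loop|nloop] := eqVneq (src D e) (tgt D e); first by rewrite !lk_term_loop ?srcE ?tgtE.
by rewrite /lk_term srcE tgtE /arrow_sign h_sign.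
Qed.

Lemma lk_renameD D f j k : injective f -> j != k -> lk (renameD f D) j k = lk D j k.
Proof.
move=> f_inj; apply: lk_map => // [[[a b] s] [[a' b'] s'] [/f_inj-> -> ->]] //.
Qed.

Lemma lk_flipD D a s j k : labels_uniq D -> tl a s \in flatten D ->
  circ D (tl a s) = circ D (hd a s) -> j != k -> lk (flipD a D) j k = lk D j k.
Proof.
move=> lu aD loop; set fl := fun e : endpt => if e.1.1 == a then (e.1, ~~ e.2) else e.
have flK : involutive fl.
  move=> [[n b] t]; rewrite /fl /=.
  by case: (n =P a) => [->|/eqP/negbTE na] /=; rewrite ?eqxx ?negbK ?na.
apply: (lk_map (can_inj flK)) => [e|e|e eA]; rewrite /fl /=; try by case: ifP.
case: (e.1.1 =P a) => // /(arrow_label_tail lu eA aD) ->.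
by rewrite /src /tgt loop eqxx.
Qed.

Lemma adj2_if D (o : bool) x y : (if o then adjD D x y else adjD D y x) -> adj2 D x y.
Proof. by rewrite /adj2; case: o => ->; rewrite ?orbT. Qed.

Lemma isotopy_move_lk D D' j k : gd_wf D -> gd_wf D' -> isotopy_move D D' -> j != k ->
  lk D j k = lk D' j k.
Proof.
move=> wf wf' mv jk; have u := labels_uniq_flatten (wf_labels_uniq wf).
case: mv => [mv|[mv|[mv|[[i [_ ->]]|[f [f_inj ->]]]]]].
- exact: lk_R1 mv jk.
- exact: lk_R2 mv.
- case: mv => [a [b [c [sa [sb [sc [oT [oM [oB [_ [h1 [h2 [h3 [_ [_ ->]]]]]]]]]]]]]]].
  apply/lk_same_circles/(same_circles_swapD u (adj2_if h1)).
  apply/(same_circles_swapD u (adj2_if h2))/(same_circles_swapD u (adj2_if h3)).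
  exact: same_circles_refl.
- exact/lk_same_circles/same_circles_rotD.
- by rewrite lk_renameD.
Qed.

Lemma forbidden_move_lk D D' j k : gd_wf D -> mFH D D' \/ mFT D D' -> lk D j k = lk D' j k.
Proof.
move=> wf mv; have u := labels_uniq_flatten (wf_labels_uniq wf).
apply: lk_same_circles; case: mv => [[a [b [s [t [_ [h ->]]]]]]|[a [b [s [t [_ [h ->]]]]]]];
  by apply/(same_circles_swapD u (adj2_if (o := true) h))/same_circles_refl.
Qed.

Lemma self_crossing_change_lk D D' j k : gd_wf D -> mSC D D' -> j != k -> lk D j k = lk D' j k.
Proof.
by move=> /wf_labels_uniq lu [a [s [aD [loop ->]]]] jk; rewrite (lk_flipD lu aD loop jk).
Qed.

Definition lk_equiv (D D' : gdiag) : Prop := forall j k, j != k -> lk D j k = lk D' j k.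

Lemma clos_rst_lk_equiv (R : relation gdiag) : (forall D D', R D D' -> lk_equiv D D') ->
  forall D D', clos_refl_sym_trans gdiag R D D' -> lk_equiv D D'.
Proof.
move=> R_lk D D'.
elim=> {D D'} [D D' /R_lk //|//|D D' _ IH j k jk|D1 D2 D3 _ IH12 _ IH23 j k jk].
- by rewrite IH.
- by rewrite IH12 // IH23.
Qed.

Lemma viso_equiv_lk D D' : viso_equiv D D' -> lk_equiv D D'.
Proof. by apply: clos_rst_lk_equiv => {}D {}D' [wf [wf' mv]] j k; apply: isotopy_move_lk. Qed.

Lemma htpy_equiv_lk D D' : htpy_equiv D D' -> lk_equiv D D'.
Proof.
apply: clos_rst_lk_equiv => {}D {}D' [wf [wf' [mv|mv]]] j k jk.
  exact: isotopy_move_lk.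
exact: self_crossing_change_lk.
Qed.

Lemma forb_equiv_lk D D' : forb_equiv D D' -> lk_equiv D D'.
Proof.
apply: clos_rst_lk_equiv => {}D {}D' [wf [wf' [mv|mv]]] j k jk.
  exact: isotopy_move_lk.
exact: forbidden_move_lk.
Qed.

Lemma forb_equiv_wf D D' : forb_equiv D D' -> gd_wf D <-> gd_wf D'.
Proof. by elim=> {D D'} [D D' [? [? _]]|D|D D' _|D1 D2 D3 _ ? _ ?]; tauto. Qed.

Definition quiver_arrow (D : gdiag) (e : endpt) : nat * nat * bool := (src D e, tgt D e, e.2).

Definition quiver (D : gdiag) : seq (nat * nat * bool) := map (quiver_arrow D) (arrowsD D).

Lemma lk_quiver D j k : lk D j k =
  ((count_mem (j, k, true) (quiver D))%:Z - (count_mem (j, k, false) (quiver D))%:Z)%R.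
Proof.
rewrite /lk /quiver; elim: (arrowsD D) => [|e A IH]; first by rewrite big_nil.
rewrite big_cons IH /= /lk_term /quiver_arrow /arrow_sign !xpair_eqE.
by case: (src D e == j); case: (tgt D e == k); case: (e.2) => /=; lia.
Qed.

Lemma reduced_quiver_loop D j b : reduced D -> count_mem (j, j, b) (quiver D) = 0.
Proof.
case/andP=> /allP no_loop _; rewrite /quiver count_map; apply/eqP.
rewrite -leqn0 leqNgt -has_count; apply/hasP => -[e eA /eqP[se te _]].
by move: (no_loop e eA); rewrite se te eqxx.
Qed.

Lemma reduced_quiver_sign D j k : reduced D ->
  count_mem (j, k, true) (quiver D) = 0 \/ count_mem (j, k, false) (quiver D) = 0.
Proof.
case/andP=> _ /allP same_sign; rewrite /quiver !count_map.
set has_pos := has (preim (quiver_arrow D) (pred1 (j, k, true))) (arrowsD D).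
have [/hasP[e eA /eqP[se te e_pos]]|] := boolP has_pos; last first.
  by rewrite /has_pos has_count -leqNgt leqn0 => /eqP; left.
right; apply/eqP; rewrite -leqn0 leqNgt -has_count; apply/hasP => -[f fA /eqP[sf tf f_neg]].
by move/allP: (same_sign e eA) => /(_ f fA); rewrite se sf te tf e_pos f_neg !eqxx.
Qed.

Lemma nat_diff_unique (p1 n1 p2 n2 : nat) : p1 = 0 \/ n1 = 0 -> p2 = 0 \/ n2 = 0 ->
  (p1%:Z - n1%:Z = p2%:Z - n2%:Z)%R -> p1 = p2 /\ n1 = n2.
Proof. lia. Qed.

Lemma reduced_quiver_perm R1 R2 : reduced R1 -> reduced R2 -> lk_equiv R1 R2 ->
  perm_eq (quiver R1) (quiver R2).
Proof.
move=> r1 r2 lk12; apply/allP => [[[j k] b]] _; apply/eqP.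
have [<-|jk] := eqVneq j k; first by rewrite !reduced_quiver_loop.
have := lk12 j k jk; rewrite !lk_quiver.
by case/(nat_diff_unique (reduced_quiver_sign j k r1) (reduced_quiver_sign j k r2)); case: b.
Qed.

Lemma seqs_map (f : endpt -> endpt) k A : seqs k (map f A) = map (map f) (seqs k A).
Proof. by elim: k => //= k IH; rewrite allpairs_mapl IH allpairs_mapr map_allpairs. Qed.

Lemma seqs_perm k A B : perm_eq A B -> perm_eq (seqs k A) (seqs k B).
Proof. by move=> AB; elim: k => //= k IH; apply: perm_allpairs. Qed.

Lemma seqs_subset k A p : p \in seqs k A -> {subset p <= A}.
Proof.
elim: k p => [|k IH] p /=; first by rewrite inE => /eqP-> y.
case/allpairsPdep => x [s [xA sS ->]] y; rewrite inE => /predU1P[->|/(IH _ sS)] //.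
Qed.

Section QuiverIsomorphism.

Variables (R1 R2 : gdiag) (f : endpt -> endpt).
Hypothesis f_inj : {in arrowsD R1 &, injective f}.
Hypothesis f_onto : perm_eq (map f (arrowsD R1)) (arrowsD R2).
Hypothesis f_quiver : {in arrowsD R1, forall e, quiver_arrow R2 (f e) = quiver_arrow R1 e}.

Let f_src e : e \in arrowsD R1 -> src R2 (f e) = src R1 e.
Proof. by move/f_quiver; case. Qed.

Let f_tgt e : e \in arrowsD R1 -> tgt R2 (f e) = tgt R1 e.
Proof. by move/f_quiver; case. Qed.

Let f_sign e : e \in arrowsD R1 -> (f e).2 = e.2.
Proof. by move/f_quiver; case. Qed.

Lemma wt_map p : {subset p <= arrowsD R1} -> wt (map f p) = wt p.
Proof. by move=> pA; rewrite /wt big_map; apply: eq_big_seq => e /pA/f_sign->. Qed.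

Lemma isMP_map p : {subset p <= arrowsD R1} -> isMP R2 (map f p) = isMP R1 p.
Proof.
case: p => [|x q] // pA; rewrite [map f _]/= /isMP -map_cons.
have xA : x \in arrowsD R1 := pA x (mem_head x q).
have lA : last x q \in arrowsD R1 := pA _ (mem_last x q).
have -> : all (fun e => e \in arrowsD R2) (map f (x :: q)).
  by apply/allP => _ /mapP[e /pA eA ->]; rewrite -(perm_mem f_onto) map_f.
have -> : all (fun e => e \in arrowsD R1) (x :: q) by apply/allP.
rewrite (map_inj_in_uniq (sub_in2 pA f_inj)) last_map path_map.
rewrite (@eq_in_path _ (mem (arrowsD R1)) _ (fun e g => tgt R1 e == src R1 g)); last first.
- by apply/allP.
- by move=> e g eA gA /=; rewrite f_tgt ?f_src.
congr (_ && ~~ _); rewrite -(perm_has _ f_onto) has_map; apply: eq_in_has => e eA /=.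
by rewrite (mem_map_in f_inj pA eA) !f_src ?f_tgt.
Qed.

Lemma PhiF_iso a k : PhiF R2 a k = PhiF R1 a k.
Proof.
rewrite /PhiF -(permP (seqs_perm k f_onto)) seqs_map count_map.
by apply: eq_in_count => p /seqs_subset pA /=; rewrite isMP_map ?wt_map.
Qed.

End QuiverIsomorphism.

Lemma wf_uniq_arrowsD D : gd_wf D -> uniq (arrowsD D).
Proof. by move/wf_labels_uniq/labels_uniq_flatten; apply: filter_uniq. Qed.

Lemma PhiF_quiver_perm R1 R2 a k : gd_wf R1 -> gd_wf R2 ->
  perm_eq (quiver R1) (quiver R2) -> PhiF R1 a k = PhiF R2 a k.
Proof.
move=> /wf_uniq_arrowsD u1 /wf_uniq_arrowsD u2 /(perm_eq_map_bij u1 u2)[f [f_onto f_quiver]].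
have f_inj : {in arrowsD R1 &, injective f}.
  by apply: uniq_map_inj_in; rewrite (perm_uniq f_onto).
by rewrite (PhiF_iso f_inj f_onto f_quiver).
Qed.

Lemma reduced_PhiF_lk_equiv R1 R2 a k : gd_wf R1 -> gd_wf R2 -> reduced R1 -> reduced R2 ->
  lk_equiv R1 R2 -> PhiF R1 a k = PhiF R2 a k.
Proof. by move=> w1 w2 r1 r2 /(reduced_quiver_perm r1 r2)/(PhiF_quiver_perm a k w1 w2). Qed.

Lemma lk_equiv_PhiF D1 D2 R1 R2 : gd_wf D1 -> gd_wf D2 -> lk_equiv D1 D2 ->
  forb_equiv D1 R1 -> reduced R1 -> forb_equiv D2 R2 -> reduced R2 ->
  forall a k, PhiF R1 a k = PhiF R2 a k.
Proof.
move=> w1 w2 lk12 F1 r1 F2 r2 a k.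
have wR1 := proj1 (forb_equiv_wf F1) w1; have wR2 := proj1 (forb_equiv_wf F2) w2.
apply: (reduced_PhiF_lk_equiv a k wR1 wR2 r1 r2) => j l jl.
by rewrite -(forb_equiv_lk F1 jl) -(forb_equiv_lk F2 jl) lk12.
Qed.

Theorem mainTheorem5 :
  (forall D1 D2 R1 R2 : gdiag,
     gd_wf D1 -> gd_wf D2 -> viso_equiv D1 D2 ->
     forb_equiv D1 R1 -> reduced R1 -> forb_equiv D2 R2 -> reduced R2 ->
     forall (a : int) (k : nat), PhiF R1 a k = PhiF R2 a k) /\
  (forall D1 D2 R1 R2 : gdiag,
     gd_wf D1 -> gd_wf D2 -> htpy_equiv D1 D2 ->
     forb_equiv D1 R1 -> reduced R1 -> forb_equiv D2 R2 -> reduced R2 ->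
     forall (a : int) (k : nat), PhiF R1 a k = PhiF R2 a k).
Proof.
split=> D1 D2 R1 R2 w1 w2 equiv12 F1 r1 F2 r2; apply: (lk_equiv_PhiF w1 w2 _ F1 r1 F2 r2).
- exact: viso_equiv_lk.
- exact: htpy_equiv_lk.
Qed.
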